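(* Let $[\mu]\in\mathbb PV_n$ be a critical point of $F_n$ of type $\alpha=(k_1<k_2<\dots<k_r;d_1,\dots,d_r)$. Then (i) if $\alpha=(0;n)$, then $F_n([\mu])=\frac4n$; (ii) if $\alpha\neq(0;n)$, then $F_n([\mu])=4\left(n-\dfrac{(k_1d_1+\dots+k_rd_r)^2}{k_1^2d_1+\dots+k_r^2d_r}\right)^{-1}$.
   Context: $V_n$ is the space of bilinear maps $\mu:\mathbb C^n\times\mathbb C^n\to\mathbb C^n$ with standard Hermitian structures. $L^\mu_XY=\mu(X,Y)$, $R^\mu_XY=\mu(Y,X)$, $\mathrm M_\mu=2\sum_i L^\mu_{X_i}(L^\mu_{X_i})^*-2\sum_i (L^\mu_{X_i})^*L^\mu_{X_i}-2\sum_i (R^\mu_{X_i})^*R^\mu_{X_i}$ ($\{X_i\}$ orthonormal), $F_n([\mu])=\operatorname{tr}\mathrm M_\mu^2/\|\mu\|^4$. $[\mu]$ is a critical point of $F_n$ iff $\mathrm M_\mu=c_\mu I+D_\mu$ with $c_\mu\in\mathbb R$ and $D_\mu$ a derivation of $\mu$. For such a critical point there is $c>0$ such that the eigenvalues of $cD_\mu$ are integers with no common divisor $>1$; if $k_1<\dots<k_r$ are the distinct eigenvalues of $cD_\mu$ with multiplicities $d_1,\dots,d_r$, the data $(k_1<\dots<k_r;d_1,\dots,d_r)$ is called the type of $[\mu]$. Type $(0;n)$ means $D_\mu=0$. *)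

From HB Require Import structures.
From mathcomp Require Import all_boot all_order all_algebra.
From mathcomp Require Import complex.
From mathcomp Require Import reals.
Set Implicit Arguments. Unset Strict Implicit. Unset Printing Implicit Defensive.
Import Order.TTheory GRing.Theory Num.Theory.
Local Open Scope ring_scope.

Section Defs.
Variable R : realType.
Local Notation C := R[i].

(* A bilinear map mu : C^n x C^n -> C^n, given by its structure constants
   w.r.t. the standard (orthonormal) basis e_1..e_n:
   mu(e_i, e_j) = \sum_k (bil i j k) e_k. *)
Definition bil (n : nat) := 'I_n -> 'I_n -> 'I_n -> C.

Definition bil_app n (mu : bil n) (X Y : 'cV[C]_n) : 'cV[C]_n :=
  \col_k \sum_(i < n) \sum_(j < n) X i ord0 * Y j ord0 * mu i j k.

Definition adj n (A : 'M[C]_n) : 'M[C]_n := map_mx Num.conj A^T.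

(* L^mu_{e_i} Y = mu(e_i, Y) ;  R^mu_{e_i} Y = mu(Y, e_i) *)
Definition Lmx n (mu : bil n) (i : 'I_n) : 'M[C]_n := \matrix_(k, j) mu i j k.
Definition Rmx n (mu : bil n) (i : 'I_n) : 'M[C]_n := \matrix_(k, j) mu j i k.

Definition Mmu n (mu : bil n) : 'M[C]_n :=
  2%:R *: (\sum_i Lmx mu i *m adj (Lmx mu i))
  - 2%:R *: (\sum_i adj (Lmx mu i) *m Lmx mu i)
  - 2%:R *: (\sum_i adj (Rmx mu i) *m Rmx mu i).

Definition norm2 n (mu : bil n) : C :=
  \sum_i \sum_j \sum_k `|mu i j k| ^+ 2.

Definition Fn n (mu : bil n) : C := \tr (Mmu mu *m Mmu mu) / (norm2 mu ^+ 2).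

Definition is_derivation n (mu : bil n) (D : 'M[C]_n) : Prop :=
  forall X Y : 'cV[C]_n,
    D *m bil_app mu X Y = bil_app mu (D *m X) Y + bil_app mu X (D *m Y).

(* [mu] is a critical point of F_n with M_mu = c_mu I + D_mu *)
Definition crit_data n (mu : bil n) (c : C) (D : 'M[C]_n) : Prop :=
  [/\ c \is Num.real, is_derivation mu D & Mmu mu = c%:M + D].

(* (ks ; ds) = (k_1 < ... < k_r ; d_1, ..., d_r) is the type of the critical
   point with derivation D: for some c0 > 0 the eigenvalues of c0 D are the
   integers k_i (distinct, increasing) with multiplicities d_i, and they have
   no common divisor > 1 (the latter is waived when D = 0, whose type is
   (0;n) by convention). *)
Definition is_type n (D : 'M[C]_n) (ks : seq int) (ds : seq nat) : Prop :=
  [/\ size ks = size ds, sorted <%R ks, all (fun d => (0 < d)%N) ds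
    & exists c0 : R, 0 < c0 /\
      char_poly ((c0%:C)%C *: D) =
        \prod_(i < size ks) ('X - ((nth 0%Z ks i)%:~R : C)%:P) ^+ (nth 0%N ds i)
      /\ (D = 0 \/ \big[gcdn/0%N]_(i < size ks) `|nth 0%Z ks i|%N = 1%N)].

End Defs.

(* Write M := M_mu = c I + D and N := ||mu||^2.  Each of the three sums defining M
   has trace N, so tr M = -2 N, and tr (D M) = 0 because D is a derivation
   (D L_{e_i} = L_{D e_i} + L_{e_i} D).  Hence tr M^2 = c tr M, i.e. F_n = -2 c / N,
   while c n + tr D = -2 N and tr D^2 = - c tr D.  Eliminating c and N gives
   F_n = 4 / n when tr D = 0 and F_n = 4 (n - (tr D)^2 / tr D^2)^-1 when tr D^2 <> 0; the
   ratio (tr D)^2 / tr D^2 is unchanged by rescaling D, and for the rescaling whose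
   eigenvalues are the k_i with multiplicities d_i it is computed by triangularizing. *)

From HB Require Import structures.
From mathcomp Require Import all_boot all_order all_algebra.
From mathcomp Require Import complex.
From mathcomp Require Import reals.
From mathcomp Require Import ring.
Set Implicit Arguments. Unset Strict Implicit. Unset Printing Implicit Defensive.
Import Order.TTheory GRing.Theory Num.Theory.
Local Open Scope ring_scope.

Section Conjugation.
Variables (F : fieldType) (n : nat) (P : 'M[F]_n).
Hypothesis P_unit : P \in unitmx.

Lemma mxtrace_conjumx (A : 'M[F]_n) : \tr (conjmx P A) = \tr A.
Proof. by rewrite conjumx // mxtrace_mulC mulmxA mulVmx // mul1mx. Qed.

Lemma char_poly_conjumx (A : 'M[F]_n) : char_poly (conjmx P A) = char_poly A.
Proof.
pose Pc := map_mx (@polyC F) P; pose Pci := map_mx (@polyC F) (invmx P).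
have Pc_inv : Pc *m Pci = 1%:M by rewrite -map_mxM mulmxV // map_mx1.
rewrite /char_poly; have -> : char_poly_mx (conjmx P A) = Pc *m char_poly_mx A *m Pci.
  rewrite conjumx // /char_poly_mx mulmxBr mulmxBl !map_mxM.
  by rewrite scalar_mxC -(mulmxA 'X%:M) Pc_inv mulmx1.
by rewrite !det_mulmx mulrAC -det_mulmx Pc_inv det1 mul1r.
Qed.

End Conjugation.

Lemma mxtrace_mulmxE (R : pzSemiRingType) n (A B : 'M[R]_n) :
  \tr (A *m B) = \sum_i \sum_j A i j * B j i.
Proof. by apply: eq_bigr => i _; rewrite mxE. Qed.

Lemma mxtrace_trig_mulmx (R : pzSemiRingType) n (A B : 'M[R]_n) :
  is_trig_mx A -> is_trig_mx B -> \tr (A *m B) = \sum_i A i i * B i i.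
Proof.
move=> /is_trig_mxP A_trig /is_trig_mxP B_trig; apply: eq_bigr => i _.
rewrite mxE (bigD1 i) //= big1 ?addr0 // => j /negPf ji.
case: (ltngtP i j) => [/A_trig->|/B_trig->|/val_inj/eqP]; rewrite ?mul0r ?mulr0 //.
by rewrite eq_sym ji.
Qed.

Lemma mxtrace_char_poly_roots (C : numClosedFieldType) n (A : 'M[C]_n) (r : seq C) :
  char_poly A = \prod_(x <- r) ('X - x%:P) ->
  \tr A = \sum_(x <- r) x /\ \tr (A *m A) = \sum_(x <- r) x ^+ 2.
Proof.
case: n => [|n] in A * => charA.
  have := size_char_poly A; rewrite charA size_prod_XsubC => -[/size0nil ->].
  by rewrite !big_nil /mxtrace !big_ord0.
have [P P_unitary T_trig] := Schur A (ltn0Sn n).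
have P_unit := unitarymx_unit P_unitary; set T := conjmx P A in T_trig.
have diag_r : perm_eq [seq T i i | i <- enum 'I_n.+1] r.
  apply: prod_XsubC_eq; rewrite -charA -(char_poly_conjumx P_unit).
  by rewrite (char_poly_trig T_trig) big_map big_enum.
have sum_diag (f : C -> C) : \sum_(x <- r) f x = \sum_i f (T i i).
  by rewrite -(perm_big _ diag_r) big_map big_enum.
split; first by rewrite -(mxtrace_conjumx P_unit) sum_diag.
rewrite -(mxtrace_conjumx P_unit) conjmxM ?inE ?stablemx_unit //.
by rewrite mxtrace_trig_mulmx // sum_diag; under eq_bigr do rewrite expr2.
Qed.

Section Bilinear.
Variable R : realType.
Local Notation C := R[i].
Variables (n : nat) (mu : bil R n).

Lemma mxtrace_mul_adj (A B : 'M[C]_n) :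
  \tr (A *m adj B) = \sum_i \sum_j A i j * (B i j)^*.
Proof.
by rewrite mxtrace_mulmxE; apply: eq_bigr => i _; under eq_bigr do rewrite !mxE.
Qed.

Lemma mxtrace_Lmx_adj i :
  \tr (Lmx mu i *m adj (Lmx mu i)) = \sum_j \sum_k `|mu i j k| ^+ 2.
Proof.
rewrite mxtrace_mul_adj exchange_big; apply: eq_bigr => j _; apply: eq_bigr => k _.
by rewrite !mxE normCK.
Qed.

Lemma sum_adj_Rmx_mulE a b :
  (\sum_j adj (Rmx mu j) *m Rmx mu j) a b = \tr (Lmx mu b *m adj (Lmx mu a)).
Proof.
rewrite summxE mxtrace_mul_adj exchange_big; apply: eq_bigr => j _.
by rewrite mxE; apply: eq_bigr => k _; rewrite !mxE mulrC.
Qed.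

Lemma mxtrace_Mmu : \tr (Mmu mu) = - 2%:R * norm2 mu.
Proof.
have trLL : \tr (\sum_i Lmx mu i *m adj (Lmx mu i)) = norm2 mu.
  by rewrite raddf_sum; apply: eq_bigr => i _; apply: mxtrace_Lmx_adj.
have trLtL : \tr (\sum_i adj (Lmx mu i) *m Lmx mu i) = norm2 mu.
  by rewrite -trLL !raddf_sum; apply: eq_bigr => i _; apply: mxtrace_mulC.
have trRtR : \tr (\sum_i adj (Rmx mu i) *m Rmx mu i) = norm2 mu.
  rewrite -trLL [RHS]raddf_sum; apply: eq_bigr => i _; exact: sum_adj_Rmx_mulE.
by rewrite /Mmu !raddfB /= !mxtraceZ trLL trLtL trRtR; ring.
Qed.

Lemma bil_app_deltal i (Y : 'cV[C]_n) : bil_app mu (delta_mx i 0) Y = Lmx mu i *m Y.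
Proof.
apply/matrixP => k z; rewrite ord1 !mxE (bigD1 i) //=.
rewrite [X in _ + X]big1 => [|l /negPf li].
  by rewrite addr0; apply: eq_bigr => j _; rewrite !mxE !eqxx mul1r mulrC.
by rewrite big1 // => j _; rewrite mxE li mul0r mul0r.
Qed.

Lemma bil_app_deltar (X : 'cV[C]_n) j : bil_app mu X (delta_mx j 0) = Rmx mu j *m X.
Proof.
apply/matrixP => k z; rewrite ord1 !mxE; apply: eq_bigr => l _.
rewrite (bigD1 j) //= big1 => [|m /negPf mj]; last by rewrite mxE mj mulr0 mul0r.
by rewrite addr0 !mxE eqxx mulr1 mulrC.
Qed.

Lemma derivation_Lmx D i : is_derivation mu D ->
  D *m Lmx mu i = \sum_l D l i *: Lmx mu l + Lmx mu i *m D.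
Proof.
move=> derD; apply/matrixP => k j.
have := congr1 (fun v : 'cV[C]_n => v k 0) (derD (delta_mx i 0) (delta_mx j 0)).
rewrite bil_app_deltal !bil_app_deltar bil_app_deltal !mulmxA -!colE /= !mxE.
move=> ->; congr (_ + _); rewrite summxE.
by apply: eq_bigr => l _; rewrite !mxE mulrC.
Qed.

Lemma mxtrace_derivation_Lmx_adj D : is_derivation mu D ->
  \tr (D *m \sum_i Lmx mu i *m adj (Lmx mu i)) =
  \tr (D *m \sum_i adj (Rmx mu i) *m Rmx mu i) +
  \tr (D *m \sum_i adj (Lmx mu i) *m Lmx mu i).
Proof.
move=> derD.
have trDRR : \tr (D *m \sum_i adj (Rmx mu i) *m Rmx mu i) =
    \sum_i \sum_l D l i * \tr (Lmx mu l *m adj (Lmx mu i)).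
  rewrite mxtrace_mulmxE exchange_big; apply: eq_bigr => i _.
  by apply: eq_bigr => l _; rewrite sum_adj_Rmx_mulE.
have trLDL i : \tr (Lmx mu i *m D *m adj (Lmx mu i)) =
    \tr (D *m (adj (Lmx mu i) *m Lmx mu i)).
  by rewrite -mulmxA mxtrace_mulC -mulmxA.
rewrite trDRR [in RHS]mulmx_sumr [in RHS]raddf_sum -big_split mulmx_sumr raddf_sum /=.
apply: eq_bigr => i _; rewrite mulmxA derivation_Lmx // mulmxDl mxtraceD trLDL.
rewrite mulmx_suml raddf_sum; congr (_ + _); apply: eq_bigr => l _.
by rewrite -scalemxAl; apply: mxtraceZ.
Qed.

Lemma mxtrace_derivation_Mmu D : is_derivation mu D -> \tr (D *m Mmu mu) = 0.
Proof.
move=> derD; rewrite /Mmu !mulmxBr -!scalemxAr !raddfB /= !mxtraceZ.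
by rewrite mxtrace_derivation_Lmx_adj //; ring.
Qed.

Lemma bil_neq0_dim_gt0 : (exists i j k, mu i j k != 0) -> (0 < n)%N.
Proof. by case=> i _; apply: leq_ltn_trans (ltn_ord i). Qed.

Lemma norm2_neq0 : (exists i j k, mu i j k != 0) -> norm2 mu != 0.
Proof.
move=> [i [j [k mu_ijk]]]; apply: contraNneq mu_ijk => norm0.
have sqr_ge0 (x : C) : 0 <= `|x| ^+ 2 by rewrite exprn_ge0.
have sum_ge0 l j' : 0 <= \sum_k' `|mu l j' k'| ^+ 2 by apply: sumr_ge0.
move: (psumr_eq0P (fun l _ => sumr_ge0 _ (fun j' _ => sum_ge0 l j')) norm0 (i:=i) isT).
move=> /(psumr_eq0P (fun j' _ => sum_ge0 i j'))/(_ j isT).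
move=> /(psumr_eq0P (fun k' _ => sqr_ge0 (mu i j k')))/(_ k isT)/eqP.
by rewrite sqrf_eq0 normr_eq0.
Qed.

End Bilinear.

Section CriticalPoint.
Variable R : realType.
Local Notation C := R[i].
Variables (n : nat) (mu : bil R n) (c : C) (D : 'M[C]_n).
Hypotheses (mu_neq0 : exists i j k, mu i j k != 0) (crit : crit_data mu c D).

Lemma crit_mxtrace : c * n%:R + \tr D = - 2%:R * norm2 mu.
Proof.
case: crit => _ _ M_eq.
by rewrite -mxtrace_Mmu M_eq mxtraceD mxtrace_scalar mulr_natr.
Qed.

Lemma crit_mxtrace_sqr : \tr (D *m D) = - (c * \tr D).
Proof.
case: crit => _ derD M_eq; have := mxtrace_derivation_Mmu derD.
rewrite M_eq mulmxDr mul_mx_scalar mxtraceD mxtraceZ addrC => /eqP.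
by rewrite addr_eq0 => /eqP.
Qed.

Lemma Fn_crit : Fn mu = - 2%:R * c / norm2 mu.
Proof.
case: crit => _ derD M_eq; have N_neq0 := norm2_neq0 mu_neq0.
rewrite /Fn {2}M_eq mulmxDr mul_mx_scalar mxtraceD mxtraceZ mxtrace_mulC.
by rewrite mxtrace_derivation_Mmu // mxtrace_Mmu addr0; field.
Qed.

Lemma Fn_crit_mxtrace0 : \tr D = 0 -> Fn mu = 4%:R / n%:R.
Proof.
move=> trD0; have N_neq0 := norm2_neq0 mu_neq0.
have n_neq0 : n%:R != 0 :> C by rewrite pnatr_eq0 -lt0n (bil_neq0_dim_gt0 mu_neq0).
have c_eq : c = - 2%:R * norm2 mu / n%:R.
  by rewrite -crit_mxtrace trD0 addr0 mulfK.
by rewrite Fn_crit c_eq; field; rewrite N_neq0 n_neq0.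
Qed.

Lemma Fn_crit_mxtrace : \tr (D *m D) != 0 ->
  Fn mu = 4%:R * (n%:R - \tr D ^+ 2 / \tr (D *m D))^-1.
Proof.
rewrite crit_mxtrace_sqr oppr_eq0 mulf_eq0 negb_or => /andP[c_neq0 trD_neq0].
have N_neq0 := norm2_neq0 mu_neq0.
have cn_trD_neq0 : c * n%:R + \tr D != 0.
  by rewrite crit_mxtrace mulf_neq0 // oppr_eq0 pnatr_eq0.
have N_eq : norm2 mu = - (c * n%:R + \tr D) / 2%:R by rewrite crit_mxtrace; field.
rewrite Fn_crit N_eq.
have -> : n%:R - \tr D ^+ 2 / - (c * \tr D) = (c * n%:R + \tr D) / c.
  by field; rewrite c_neq0 trD_neq0.
by rewrite invf_div; field; rewrite c_neq0 cn_trD_neq0.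
Qed.

End CriticalPoint.

Definition with_mult (T I : Type) (r : seq I) (f : I -> T) (g : I -> nat) : seq T :=
  flatten [seq nseq (g i) (f i) | i <- r].

Lemma sum_with_mult (T I : Type) (V : nmodType) (r : seq I) (f : I -> T) g
    (F : T -> V) :
  \sum_(x <- with_mult r f g) F x = \sum_(i <- r) F (f i) *+ g i.
Proof.
by rewrite big_flatten big_map; apply: eq_bigr => i _; rewrite big_nseq iter_addr_0.
Qed.

Lemma prod_with_mult (T I : Type) (S : pzSemiRingType) (r : seq I) (f : I -> T) g
    (F : T -> S) :
  \prod_(x <- with_mult r f g) F x = \prod_(i <- r) F (f i) ^+ g i.
Proof.
by rewrite big_flatten big_map; apply: eq_bigr => i _; rewrite big_nseq iter_mulr_1.
Qed.

Section CriticalType.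
Variable R : realType.
Local Notation C := R[i].
Variables (n : nat) (D : 'M[C]_n) (ks : seq int) (ds : seq nat).
Hypothesis typeD : is_type D ks ds.

Lemma is_type_mxtrace : exists2 c0 : C, c0 != 0 &
  \tr D * c0 = \sum_(i < size ks) (nth 0%Z ks i)%:~R * (nth 0%N ds i)%:R /\
  \tr (D *m D) * c0 ^+ 2 = \sum_(i < size ks) (nth 0%Z ks i)%:~R ^+ 2 * (nth 0%N ds i)%:R.
Proof.
case: typeD => _ _ _ [c0 [c0_gt0 [charD _]]]; exists c0%:C%C.
  by apply: lt0r_neq0; rewrite ltcR.
set f := fun i : 'I_(size ks) => (nth 0%Z ks i)%:~R : C.
set g := fun i : 'I_(size ks) => nth 0%N ds i.
have charD_roots : char_poly (c0%:C%C *: D) =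
    \prod_(x <- with_mult (index_enum _) f g) ('X - x%:P) by rewrite prod_with_mult.
have [] := mxtrace_char_poly_roots charD_roots; rewrite !sum_with_mult => trE trsqrE.
split.
  by rewrite mulrC -mxtraceZ trE; apply: eq_bigr => i _; rewrite mulr_natr.
rewrite mulrC -mxtraceZ expr2 -scalerA scalemxAr scalemxAl trsqrE.
by apply: eq_bigr => i _; rewrite mulr_natr.
Qed.

Lemma is_type_trivial : (0 < n)%N ->
  \sum_(i < size ks) (nth 0%Z ks i)%:~R ^+ 2 * (nth 0%N ds i)%:R = 0 :> C ->
  ks = [:: 0%Z] /\ ds = [:: n].
Proof.
case: typeD => size_ks sorted_ks ds_gt0 [c0 [_ [charD _]]] n_gt0 sum0.
have size_charD := size_char_poly (c0%:C%C *: D); rewrite charD in size_charD.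
have ks0 i : (i < size ks)%N -> nth 0%Z ks i = 0%Z.
  move=> lt_i_ks; have d_gt0 : (0 < nth 0%N ds i)%N.
    by apply: (allP ds_gt0); rewrite mem_nth // -size_ks.
  have term_ge0 (j : 'I_(size ks)) :
      true -> 0 <= (nth 0%Z ks j)%:~R ^+ 2 * (nth 0%N ds j)%:R :> C.
    by move=> _; rewrite mulr_ge0 // -realEsqr realz.
  move/eqP: (psumr_eq0P term_ge0 sum0 (i := Ordinal lt_i_ks) isT).
  by rewrite mulf_eq0 pnatr_eq0 (gtn_eqF d_gt0) orbF sqrf_eq0 intr_eq0 => /eqP.
move: size_ks sorted_ks ks0 size_charD; case: ks => [|a [|b ks']] /=.
- by move=> _ _ _; rewrite big_ord0 size_poly1 => -[n0]; rewrite -n0 in n_gt0.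
- case: ds => [|d [|d' ds']] //= _ _ ks0.
  by rewrite big_ord1 size_exp_XsubC => -[<-]; move: (ks0 0%N isT) => /= ->.
- move=> _ /andP[+ _] ks0; move: (ks0 0%N isT) (ks0 1%N isT) => /= -> ->.
  by rewrite ltxx => -[].
Qed.

End CriticalType.

Theorem proposition4p4 (R : realType) (n : nat) (mu : bil R n)
  (c : R[i]) (D : 'M[R[i]]_n) (ks : seq int) (ds : seq nat) :
  (exists i j k, mu i j k != 0) ->
  crit_data mu c D ->
  is_type D ks ds ->
  ((ks = [:: 0%Z] /\ ds = [:: n]) -> Fn mu = 4%:R / n%:R) /\
  (~ (ks = [:: 0%Z] /\ ds = [:: n]) ->
     Fn mu = 4%:R * (n%:R - (\sum_(i < size ks) (nth 0%Z ks i)%:~R * (nth 0%N ds i)%:R) ^+ 2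
                          / (\sum_(i < size ks) (nth 0%Z ks i)%:~R ^+ 2 * (nth 0%N ds i)%:R))^-1).
Proof.
move=> mu_neq0 crit typeD.
have [c0 c0_neq0 [trE trsqrE]] := is_type_mxtrace typeD.
split=> [[ks_eq ds_eq]|nontrivial].
  apply: (Fn_crit_mxtrace0 mu_neq0 crit); apply: (mulIf c0_neq0).
  by rewrite mul0r trE ks_eq ds_eq big_ord1 /= mul0r.
have trsqr_neq0 : \tr (D *m D) != 0.
  apply/eqP => trsqr0; apply: nontrivial.
  by apply: (is_type_trivial typeD (bil_neq0_dim_gt0 mu_neq0)); rewrite -trsqrE trsqr0 mul0r.
rewrite -trE -trsqrE (Fn_crit_mxtrace mu_neq0 crit trsqr_neq0).
by congr (_ * (_ - _)^-1); field; rewrite c0_neq0 trsqr_neq0.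
Qed.
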